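(* The game operator $F$ is Lipschitz continuous: there is a constant $\gamma$ with $\|F(Z)-F(Z')\|_*\le\gamma\|Z-Z'\|$ for all joint states $Z,Z'$. Specifically, with $d=n+m$: for the Frobenius norm pair ($\|\cdot\|=\|\cdot\|_*=\|\cdot\|_F$) one may take $\gamma=O(2^d)$, and for the pair $\|\cdot\|=\|\cdot\|_1$ (Schatten-1/trace norm), $\|\cdot\|_*=\|\cdot\|_\infty$ (operator norm) one may take $\gamma=O(1)$.
   Context: Alice's strategy set is $\mathcal{A}=\{\alpha\in\mathbb{C}^{2^n\times 2^n}:\alpha\succeq0,\ \operatorname{Tr}\alpha=1\}$ and Bob's is $\mathcal{B}=\{\beta\in\mathbb{C}^{2^m\times 2^m}:\beta\succeq0,\ \operatorname{Tr}\beta=1\}$; joint states are pairs $Z=(\alpha,\beta)$, identified with block-diagonal matrices $\mathrm{diag}(\alpha,\beta)$ for the purpose of norms. Given a POVM $\{P_\omega\}_{\omega\in\Omega}$ on $n+m$ qubits with finite $\Omega$ and a finite-valued utility $u:\Omega\to[-1,1]$, the payoff observable is $U=\sum_\omega u(\omega)P_\omega$, and $F(\alpha,\beta)=(\operatorname{Tr}_{\mathcal B}[U^\dagger(I_{2^n}\otimes\beta)],\ -\operatorname{Tr}_{\mathcal A}[U^\dagger(\alpha\otimes I_{2^m})])$, with $\operatorname{Tr}_{\mathcal A},\operatorname{Tr}_{\mathcal B}$ the partial traces over Alice's and Bob's subsystems. The $O(\cdot)$ bounds are in terms of $d$, uniformly over such games. *)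

From HB Require Import structures.
From mathcomp Require Import all_boot all_order all_algebra.
From mathcomp Require Import all_classical all_reals.
From mathcomp Require Export complex mxtens.
Set Implicit Arguments.
Unset Strict Implicit.
Unset Printing Implicit Defensive.
Import Order.TTheory GRing.Theory Num.Theory.
Local Open Scope ring_scope.

Section QGame.
Variable R : realType.
Local Notation C := (R[i]).

Definition cabs (z : C) : R := complex.Re `|z|.

Definition dagger {p q : nat} (A : 'M[C]_(p, q)) : 'M[C]_(q, p) :=
  (map_mx Num.conj A)^T.

Definition psd {N : nat} (A : 'M[C]_N) : Prop :=
  forall v : 'cV[C]_N, 0 <= (dagger v *m A *m v) 0 0.

Definition density {N : nat} (A : 'M[C]_N) : Prop := psd A /\ \tr A = 1.

Definition povm {N : nat} {Omega : finType} (P : Omega -> 'M[C]_N) : Prop :=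
  (forall w, psd (P w)) /\ \sum_(w : Omega) P w = 1%:M.

Definition payoff {N : nat} {Omega : finType} (P : Omega -> 'M[C]_N)
  (u : Omega -> R) : 'M[C]_N := \sum_(w : Omega) ((u w)%:C)%C *: P w.

(* partial traces on C^p (x) C^q, with the indexing convention of tensmx
   (A *t B) (i,j) (k,l) = A i k * B j l *)
Definition ptraceB {p q : nat} (X : 'M[C]_(p * q)) : 'M[C]_p :=
  \matrix_(i, k) \sum_(j < q) X (mxtens_index (i, j)) (mxtens_index (k, j)).
Definition ptraceA {p q : nat} (X : 'M[C]_(p * q)) : 'M[C]_q :=
  \matrix_(j, l) \sum_(i < p) X (mxtens_index (i, j)) (mxtens_index (i, l)).

(* the game operator F(alpha, beta), a pair identified with the
   block-diagonal matrix diag(F_A, F_B) *)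
Definition gameF {p q : nat} (U : 'M[C]_(p * q)) (alpha : 'M[C]_p)
  (beta : 'M[C]_q) : 'M[C]_(p + q) :=
  block_mx (ptraceB (dagger U *m (1%:M *t beta))) 0
           0 (- ptraceA (dagger U *m (alpha *t 1%:M))).

(* joint state Z = (alpha, beta) identified with diag(alpha, beta) *)
Definition joint {p q : nat} (alpha : 'M[C]_p) (beta : 'M[C]_q) :
  'M[C]_(p + q) := block_mx alpha 0 0 beta.

Definition frob {p q : nat} (A : 'M[C]_(p, q)) : R :=
  Num.sqrt (\sum_i \sum_j cabs (A i j) ^+ 2).

Definition vnorm {N : nat} (v : 'cV[C]_N) : R := frob v.

Definition opnorm {N : nat} (A : 'M[C]_N) : R :=
  sup [set x : R | exists v : 'cV[C]_N, vnorm v <= 1 /\ x = vnorm (A *m v)].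

(* trace norm (Schatten-1): Tr |A| with |A| = sqrt(A^dagger A) the unique
   PSD square root of A^dagger A *)
Definition absmx {N : nat} (A : 'M[C]_N) : 'M[C]_N :=
  xget 0 [set P : 'M[C]_N | psd P /\ P *m P = dagger A *m A].
Definition tracenorm {N : nat} (A : 'M[C]_N) : R := complex.Re (\tr (absmx A)).

End QGame.

From HB Require Import structures.
From mathcomp Require Import all_boot all_order all_algebra.
From mathcomp Require Import all_classical all_reals.
From mathcomp Require Import complex mxtens spectral.
From mathcomp Require Import ring lra.
Set Implicit Arguments.
Unset Strict Implicit.
Unset Printing Implicit Defensive.
Import Order.TTheory GRing.Theory Num.Theory.
Local Open Scope ring_scope.

(* The payoff observable U is a Hermitian contraction: the P_w are positive
   and sum to 1, so |<z, U z>| <= |z|^2, and polarization gives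
   |<y, U x>| <= |y| |x|.  Hence all entries of U have modulus at most 1, and
   for a rank-one argument <w, Tr_B[U^dagger (1 (x) a b^dagger)] v> is the
   conjugate of <v (x) a, U (w (x) b)>, of modulus at most |w| |v| |a| |b|.
   Since F is linear it suffices to bound F(D) for D = Z - Z'.  Frobenius:
   each entry of a partial trace is a combination of the entries of D with
   coefficients of modulus at most 1, and Cauchy-Schwarz costs a factor 2^d.
   Trace norm: over an eigenbasis (f_k) of |D|, D = sum_k (D f_k) f_k^dagger
   with sum_k |D f_k| = Tr |D|, so the rank-one bound gives
   ||F(D)||_oo <= 2 ||D||_1, one ||D||_1 for each player's block. *)

Section Game.
Variable R : realType.
Local Notation C := R[i].

(** * Modulus, adjoint and sesquilinear forms *)

Lemma cabsE (z : C) : (cabs z)%:C%C = `|z|.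
Proof. by rewrite /cabs RRe_real // normr_real. Qed.

Lemma cabs_ge0 (z : C) : 0 <= cabs z.
Proof. by rewrite -ler0c cabsE. Qed.

Lemma ler_cabsD (x y : C) : cabs (x + y) <= cabs x + cabs y.
Proof. by rewrite -lecR raddfD /= !cabsE ler_normD. Qed.

Lemma cabsM (x y : C) : cabs (x * y) = cabs x * cabs y.
Proof. by apply: complexI; rewrite rmorphM /= !cabsE normrM. Qed.

Lemma cabsJ (x : C) : cabs (Num.conj x) = cabs x.
Proof. by apply: complexI; rewrite !cabsE norm_conjC. Qed.

Lemma cabsN (x : C) : cabs (- x) = cabs x.
Proof. by apply: complexI; rewrite !cabsE normrN. Qed.

Lemma cabs0 : cabs (0 : C) = 0.
Proof. by apply: complexI; rewrite cabsE normr0. Qed.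

Lemma cabs_eq0 (z : C) : (cabs z == 0) = (z == 0).
Proof. by rewrite -(inj_eq (@complexI _)) cabsE /= normr_eq0. Qed.

Lemma cabs_real (r : R) : cabs r%:C%C = `|r|.
Proof. by rewrite /cabs /=; simpc; rewrite expr0n /= addr0 sqrtr_sqr. Qed.

Lemma sqr_cabs (z : C) : (cabs z ^+ 2)%:C%C = Num.conj z * z.
Proof. by rewrite rmorphXn /= cabsE sqr_normc mulrC. Qed.

Lemma ger0_cabs (z : C) : 0 <= z -> (cabs z)%:C%C = z.
Proof. by move=> z_ge0; rewrite cabsE ger0_norm. Qed.

Lemma Re_le_cabs (z : C) : complex.Re z <= cabs z.
Proof. by rewrite (le_trans (ler_norm _)) // -lecR cabsE normc_ge_Re. Qed.

Lemma ler_cabs_sum (I : finType) (F : I -> C) :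
  cabs (\sum_i F i) <= \sum_i cabs (F i).
Proof.
elim/big_ind2: _ => [|x1 x2 y1 y2 le1 le2|//]; first by rewrite cabs0.
exact: le_trans (ler_cabsD _ _) (lerD le1 le2).
Qed.

Lemma daggerE p q (A : 'M[C]_(p, q)) i j : dagger A i j = Num.conj (A j i).
Proof. by rewrite !mxE. Qed.

Lemma daggerK p q (A : 'M[C]_(p, q)) : dagger (dagger A) = A.
Proof. by apply/matrixP=> i j; rewrite !daggerE conjCK. Qed.

Lemma dagger_mul p q r (A : 'M[C]_(p, q)) (B : 'M[C]_(q, r)) :
  dagger (A *m B) = dagger B *m dagger A.
Proof.
apply/matrixP=> i j; rewrite daggerE !mxE rmorph_sum; apply: eq_bigr => k _.
by rewrite !daggerE rmorphM mulrC.
Qed.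

Lemma daggerD p q (A B : 'M[C]_(p, q)) : dagger (A + B) = dagger A + dagger B.
Proof. by apply/matrixP=> i j; rewrite !mxE rmorphD. Qed.

Lemma daggerN p q (A : 'M[C]_(p, q)) : dagger (- A) = - dagger A.
Proof. by apply/matrixP=> i j; rewrite !mxE rmorphN. Qed.

Lemma daggerZ p q c (A : 'M[C]_(p, q)) : dagger (c *: A) = Num.conj c *: dagger A.
Proof. by apply/matrixP=> i j; rewrite !mxE rmorphM. Qed.

Lemma dagger0 p q : dagger (0 : 'M[C]_(p, q)) = 0.
Proof. by apply/matrixP=> i j; rewrite !mxE rmorph0. Qed.

Lemma dagger_sum p q (I : finType) (F : I -> 'M[C]_(p, q)) :
  dagger (\sum_i F i) = \sum_i dagger (F i).
Proof.
apply/matrixP=> a b; rewrite daggerE !summxE rmorph_sum.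
by apply: eq_bigr => i _; rewrite daggerE.
Qed.

Lemma dagger_delta p q i j : dagger (delta_mx i j : 'M[C]_(p, q)) = delta_mx j i.
Proof. by apply/matrixP=> a b; rewrite !mxE rmorph_nat andbC. Qed.

Lemma dagger_trmx p q (A : 'M[C]_(p, q)) : dagger A = map_mx Num.conj A^T.
Proof. by rewrite /dagger map_trmx. Qed.

Definition form {N : nat} (M : 'M[C]_N) (y x : 'cV[C]_N) : C :=
  (dagger y *m M *m x) 0 0.

Definition vnorm2 {N : nat} (v : 'cV[C]_N) : R := \sum_i cabs (v i 0) ^+ 2.

Lemma form_dagger N (M : 'M[C]_N) y x : form M y x = Num.conj (form (dagger M) x y).
Proof. by rewrite /form -daggerE !dagger_mul daggerK mulmxA daggerK. Qed.

Lemma formDl N (M : 'M[C]_N) y1 y2 x : form M (y1 + y2) x = form M y1 x + form M y2 x.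
Proof. by rewrite /form daggerD !mulmxDl mxE. Qed.

Lemma formDr N (M : 'M[C]_N) y x1 x2 : form M y (x1 + x2) = form M y x1 + form M y x2.
Proof. by rewrite /form !mulmxDr mxE. Qed.

Lemma formNl N (M : 'M[C]_N) y x : form M (- y) x = - form M y x.
Proof. by rewrite /form daggerN !mulNmx mxE. Qed.

Lemma formNr N (M : 'M[C]_N) y x : form M y (- x) = - form M y x.
Proof. by rewrite /form !mulmxN mxE. Qed.

Lemma formZl N (M : 'M[C]_N) c y x : form M (c *: y) x = Num.conj c * form M y x.
Proof. by rewrite /form daggerZ -!scalemxAl mxE. Qed.

Lemma formZr N (M : 'M[C]_N) c y x : form M y (c *: x) = c * form M y x.
Proof. by rewrite /form -!scalemxAr mxE. Qed.

Lemma form0l N (M : 'M[C]_N) x : form M 0 x = 0.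
Proof. by rewrite /form dagger0 !mul0mx mxE. Qed.

Lemma form0r N (M : 'M[C]_N) y : form M y 0 = 0.
Proof. by rewrite /form mulmx0 mxE. Qed.

Lemma formD N (M1 M2 : 'M[C]_N) y x : form (M1 + M2) y x = form M1 y x + form M2 y x.
Proof. by rewrite /form mulmxDr mulmxDl mxE. Qed.

Lemma formN N (M : 'M[C]_N) y x : form (- M) y x = - form M y x.
Proof. by rewrite /form mulmxN mulNmx mxE. Qed.

Lemma formZ N c (M : 'M[C]_N) y x : form (c *: M) y x = c * form M y x.
Proof. by rewrite /form -scalemxAr -scalemxAl mxE. Qed.

Lemma form_sum N (I : finType) (F : I -> 'M[C]_N) y x :
  form (\sum_i F i) y x = \sum_i form (F i) y x.
Proof. by rewrite /form mulmx_sumr mulmx_suml summxE. Qed.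

Lemma form_delta N (M : 'M[C]_N) i j : form M (delta_mx i 0) (delta_mx j 0) = M i j.
Proof. by rewrite /form dagger_delta -rowE -colE !mxE. Qed.

Lemma form_conj p q (D : 'M[C]_(p, q)) (M : 'M[C]_p) y x :
  form (dagger D *m M *m D) y x = form M (D *m y) (D *m x).
Proof. by rewrite /form dagger_mul !mulmxA. Qed.

Lemma form1 N (x : 'cV[C]_N) : form 1%:M x x = (vnorm2 x)%:C%C.
Proof.
rewrite /form mulmx1 /vnorm2 rmorph_sum mxE; apply: eq_bigr => i _.
by rewrite daggerE -sqr_cabs.
Qed.

Lemma formE N (M : 'M[C]_N) y x :
  form M y x = \sum_i \sum_k Num.conj (y i 0) * M i k * x k 0.
Proof.
rewrite /form mxE exchange_big; apply: eq_bigr => k _; rewrite mxE mulr_suml.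
by apply: eq_bigr => i _; rewrite daggerE.
Qed.

(* Over [C] the diagonal determines the form: polarize with [x] and ['i x]. *)
Lemma form_eq0 N (M : 'M[C]_N) : (forall z, form M z z = 0) -> M = 0.
Proof.
move=> M0; have M0_sym x y : form M x y + form M y x = 0.
  by have := M0 (x + y); rewrite formDl !formDr !M0 add0r addr0 addrC.
apply/matrixP=> i j; rewrite mxE -form_delta.
have := M0_sym (delta_mx i 0) ('i *: delta_mx j 0).
rewrite formZr formZl conjCi mulNr -mulrBr => /eqP.
rewrite mulf_eq0 (negPf (neq0Ci _)) /= subr_eq0 => /eqP eq_ji.
by move: (M0_sym (delta_mx i 0) (delta_mx j 0)) => /eqP; rewrite eq_ji -mulr2n mulrn_eq0 => /eqP.
Qed.

Lemma dagger_psd N (M : 'M[C]_N) : psd M -> dagger M = M.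
Proof.
move=> M_psd; apply/eqP; rewrite -subr_eq0; apply/eqP; apply: form_eq0 => z.
rewrite formD formN -[form (dagger M) z z]conjCK -form_dagger.
by have /ger0_real/CrealP -> := M_psd z; rewrite subrr.
Qed.

Lemma vnorm2_ge0 N (x : 'cV[C]_N) : 0 <= vnorm2 x.
Proof. by apply: sumr_ge0 => i _; rewrite exprn_ge0 ?cabs_ge0. Qed.

Lemma vnormE N (x : 'cV[C]_N) : vnorm x = Num.sqrt (vnorm2 x).
Proof. by congr Num.sqrt; apply: eq_bigr => i _; rewrite big_ord1. Qed.

Lemma vnorm_ge0 N (x : 'cV[C]_N) : 0 <= vnorm x.
Proof. by rewrite vnormE sqrtr_ge0. Qed.

Lemma sqr_vnorm N (x : 'cV[C]_N) : vnorm x ^+ 2 = vnorm2 x.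
Proof. by rewrite vnormE sqr_sqrtr // vnorm2_ge0. Qed.

Lemma vnorm_le N (x : 'cV[C]_N) c : 0 <= c -> vnorm2 x <= c ^+ 2 -> vnorm x <= c.
Proof. by move=> c_ge0 le_xc; rewrite -(ger0_norm c_ge0) -sqrtr_sqr vnormE ler_wsqrtr. Qed.

Lemma vnorm2Z N c (x : 'cV[C]_N) : vnorm2 (c *: x) = cabs c ^+ 2 * vnorm2 x.
Proof. by apply: complexI; rewrite -form1 formZl formZr form1 rmorphM /= sqr_cabs mulrA. Qed.

Lemma vnormN N (x : 'cV[C]_N) : vnorm (- x) = vnorm x.
Proof. by rewrite !vnormE -scaleN1r vnorm2Z cabsN cabs_real normr1 expr1n mul1r. Qed.

Lemma vnorm_eq0 N (x : 'cV[C]_N) : vnorm x = 0 -> x = 0.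
Proof.
move=> /(congr1 (fun r => r ^+ 2)); rewrite sqr_vnorm expr0n /= => /eqP.
rewrite psumr_eq0 => [/allP x0|i _]; last by rewrite exprn_ge0 ?cabs_ge0.
apply/matrixP=> i j; rewrite ord1 mxE; apply/eqP; rewrite -cabs_eq0.
by have := x0 i (mem_index_enum _); rewrite /= sqrf_eq0.
Qed.

Lemma vnorm_delta N (i : 'I_N) : vnorm (delta_mx i 0 : 'cV[C]_N) = 1.
Proof.
rewrite vnormE /vnorm2 (bigD1 i) //= big1 ?addr0 => [|j j_neq]; last first.
  by rewrite mxE (negPf j_neq) /= cabs0 expr0n.
by rewrite mxE !eqxx /= cabs_real normr1 expr1n sqrtr1.
Qed.

(** * Hermitian contractions *)

Section HermitianContraction.
Variables (N : nat) (U : 'M[C]_N).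
Hypothesis U_herm : dagger U = U.
Hypothesis U_diag_le : forall z, cabs (form U z z) <= vnorm2 z.

(* Polarization: [4 Re <y, U x>] is [<y+x, U(y+x)> - <y-x, U(y-x)>], and the
   parallelogram law bounds this by [2 (|x|^2 + |y|^2)]. *)
Lemma herm_Re_form_le x y : 2 * complex.Re (form U y x) <= vnorm2 x + vnorm2 y.
Proof.
set s := form U y x.
have form_xy : form U x y = Num.conj s by rewrite form_dagger U_herm.
have polar : ((2 * complex.Re s) *+ 2)%:C%C = form U (y + x) (y + x) - form U (y - x) (y - x).
  rewrite rmorphMn rmorphM /= ReJ_add rmorph_nat.
  by rewrite !formDl !formDr !formNl !formNr form_xy -/s; field.
have parallelogram : (vnorm2 (y + x) + vnorm2 (y - x))%:C%C = ((vnorm2 x + vnorm2 y) *+ 2)%:C%C.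
  by rewrite rmorphD rmorphMn rmorphD /= -!form1 !formDl !formDr !formNl !formNr; ring.
rewrite -(ler_pMn2r (_ : 0 < 2)%N) // -(complexI parallelogram).
have -> : (2 * complex.Re s) *+ 2 = complex.Re (form U (y + x) (y + x) - form U (y - x) (y - x)).
  by rewrite -polar.
rewrite raddfB /=; apply: lerD; first exact: le_trans (Re_le_cabs _) (U_diag_le _).
by rewrite -raddfN /= (le_trans (Re_le_cabs _)) // cabsN.
Qed.

(* Rotate [x] by the phase of [<y, U x>] to make the form real. *)
Lemma herm_cabs_form_le x y : 2 * cabs (form U y x) <= vnorm2 x + vnorm2 y.
Proof.
set s := form U y x.
have [->|s_neq0] := eqVneq s 0; first by rewrite cabs0 mulr0 addr_ge0 ?vnorm2_ge0.
have cabs_neq0 : (cabs s)%:C%C != 0 by rewrite cabsE normr_eq0.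
pose phase := Num.conj s / (cabs s)%:C%C.
have form_phase : form U y (phase *: x) = (cabs s)%:C%C.
  by rewrite formZr -/s /phase mulrAC -sqr_cabs rmorphXn /= expr2 mulfK.
have cabs_phase : cabs phase = 1.
  rewrite /phase cabsM cabsJ -fmorphV cabs_real ger0_norm ?invr_ge0 ?cabs_ge0 //.
  by rewrite mulfV // cabs_eq0.
by have := herm_Re_form_le (phase *: x) y; rewrite form_phase vnorm2Z cabs_phase expr1n mul1r.
Qed.

(* Apply the AM-GM bound to [|y| x] and [|x| y]. *)
Lemma herm_form_le x y : cabs (form U y x) <= vnorm y * vnorm x.
Proof.
have [->|x_neq0] := eqVneq x 0; first by rewrite form0r cabs0 mulr_ge0 ?vnorm_ge0.
have [->|y_neq0] := eqVneq y 0; first by rewrite form0l cabs0 mulr_ge0 ?vnorm_ge0.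
have vnorm_gt0 N' (z : 'cV[C]_N') : z != 0 -> 0 < vnorm z.
  by move=> z_neq0; rewrite lt_def vnorm_ge0 andbT; apply: contra_neq z_neq0; apply: vnorm_eq0.
have := herm_cabs_form_le ((vnorm y)%:C%C *: x) ((vnorm x)%:C%C *: y).
rewrite formZl formZr !vnorm2Z !cabsM cabsJ !cabs_real !ger0_norm ?vnorm_ge0 //.
rewrite -!sqr_vnorm => le_scaled.
have := mulr_gt0 (vnorm_gt0 _ _ x_neq0) (vnorm_gt0 _ _ y_neq0); nra.
Qed.

End HermitianContraction.

Section Payoff.
Variables (N : nat) (Omega : finType) (P : Omega -> 'M[C]_N) (u : Omega -> R).
Hypothesis P_povm : povm P.
Hypothesis u_le1 : forall w, `|u w| <= 1.
Local Notation U := (payoff P u).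

Lemma payoff_herm : dagger U = U.
Proof.
rewrite /payoff dagger_sum; apply: eq_bigr => w _.
rewrite daggerZ dagger_psd; last by case: P_povm.
by congr (_ *: _); apply: conjc_real.
Qed.

Lemma payoff_diag_le z : cabs (form U z z) <= vnorm2 z.
Proof.
case: P_povm => P_psd P_sum1.
rewrite /payoff form_sum (le_trans (ler_cabs_sum _)) //.
have -> : vnorm2 z = \sum_w cabs (form (P w) z z).
  apply: complexI; rewrite -form1 -P_sum1 form_sum rmorph_sum.
  by apply: eq_bigr => w _; apply/esym/ger0_cabs/P_psd.
apply: ler_sum => w _; rewrite formZ cabsM cabs_real.
by apply: ler_piMl; rewrite ?cabs_ge0.
Qed.

Lemma payoff_form_le x y : cabs (form U y x) <= vnorm y * vnorm x.
Proof. exact: herm_form_le payoff_herm payoff_diag_le x y. Qed.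

End Payoff.

(** * Partial traces *)

Lemma sum_mxtens (V : nmodType) p q (F : 'I_(p * q) -> V) :
  \sum_r F r = \sum_i \sum_j F (mxtens_index (i, j)).
Proof.
rewrite pair_big /= (reindex (@mxtens_index p q)) /=; last first.
  by exists (@mxtens_unindex p q) => x _; rewrite (mxtens_indexK, mxtens_unindexK).
by apply: eq_bigr => -[i j].
Qed.

Definition tensv {p q : nat} (v : 'cV[C]_p) (a : 'cV[C]_q) : 'cV[C]_(p * q) :=
  \col_r (v (mxtens_unindex r).1 0 * a (mxtens_unindex r).2 0).

Lemma tensvE p q (v : 'cV[C]_p) (a : 'cV[C]_q) k l :
  tensv v a (mxtens_index (k, l)) 0 = v k 0 * a l 0.
Proof. by rewrite mxE mxtens_indexK. Qed.

Lemma vnorm_tensv p q (v : 'cV[C]_p) (a : 'cV[C]_q) :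
  vnorm (tensv v a) = vnorm v * vnorm a.
Proof.
rewrite !vnormE -sqrtrM ?vnorm2_ge0 //; congr Num.sqrt.
rewrite /vnorm2 sum_mxtens mulr_suml; apply: eq_bigr => k _; rewrite mulr_sumr.
by apply: eq_bigr => l _; rewrite tensvE cabsM exprMn.
Qed.

Definition payA {p q : nat} (U : 'M[C]_(p * q)) (beta : 'M[C]_q) : 'M[C]_p :=
  ptraceB (dagger U *m (1%:M *t beta)).

Definition payB {p q : nat} (U : 'M[C]_(p * q)) (alpha : 'M[C]_p) : 'M[C]_q :=
  ptraceA (dagger U *m (alpha *t 1%:M)).

Lemma payAE p q (U : 'M[C]_(p * q)) (M : 'M[C]_q) i k :
  payA U M i k =
  \sum_j \sum_l Num.conj (U (mxtens_index (k, l)) (mxtens_index (i, j))) * M l j.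
Proof.
rewrite mxE; apply: eq_bigr => j _; rewrite mxE sum_mxtens.
rewrite (bigD1 k) //= [X in _ + X]big1 ?addr0 => [|k' k'_neq].
  by apply: eq_bigr => l _; rewrite tensmxE daggerE mxE eqxx mul1r.
by apply: big1 => l _; rewrite tensmxE [1%:M _ _]mxE (negPf k'_neq) mul0r mulr0.
Qed.

Lemma payBE p q (U : 'M[C]_(p * q)) (M : 'M[C]_p) j l :
  payB U M j l =
  \sum_i \sum_k Num.conj (U (mxtens_index (k, l)) (mxtens_index (i, j))) * M k i.
Proof.
rewrite mxE; apply: eq_bigr => i _; rewrite mxE sum_mxtens; apply: eq_bigr => k _.
rewrite (bigD1 l) //= [X in _ + X]big1 ?addr0 => [|l' l'_neq].
  by rewrite tensmxE daggerE mxE eqxx mulr1.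
by rewrite tensmxE [1%:M _ _]mxE (negPf l'_neq) !mulr0.
Qed.

Fact payA_is_linear p q (U : 'M[C]_(p * q)) : linear (payA U).
Proof.
move=> c M1 M2; apply/matrixP=> i k.
rewrite payAE [RHS]mxE [X in _ = X + _]mxE !payAE mulr_sumr -big_split /=.
apply: eq_bigr => j _; rewrite mulr_sumr -big_split /=; apply: eq_bigr => l _.
by rewrite !mxE; ring.
Qed.

HB.instance Definition _ p q (U : 'M[C]_(p * q)) :=
  GRing.isLinear.Build C 'M[C]_q 'M[C]_p _ (payA U) (payA_is_linear U).

Fact payB_is_linear p q (U : 'M[C]_(p * q)) : linear (payB U).
Proof.
move=> c M1 M2; apply/matrixP=> j l.
rewrite payBE [RHS]mxE [X in _ = X + _]mxE !payBE mulr_sumr -big_split /=.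
apply: eq_bigr => i _; rewrite mulr_sumr -big_split /=; apply: eq_bigr => k _.
by rewrite !mxE; ring.
Qed.

HB.instance Definition _ p q (U : 'M[C]_(p * q)) :=
  GRing.isLinear.Build C 'M[C]_p 'M[C]_q _ (payB U) (payB_is_linear U).

Lemma gameFE p q (U : 'M[C]_(p * q)) alpha beta :
  gameF U alpha beta = block_mx (payA U beta) 0 0 (- payB U alpha).
Proof. by []. Qed.

Lemma gameFB p q (U : 'M[C]_(p * q)) (a a' : 'M[C]_p) (b b' : 'M[C]_q) :
  gameF U a b - gameF U a' b' = gameF U (a - a') (b - b').
Proof. by rewrite !gameFE opp_block_mx add_block_mx !oppr0 !addr0 !linearB. Qed.

Lemma jointB p q (a a' : 'M[C]_p) (b b' : 'M[C]_q) :
  joint a b - joint a' b' = joint (a - a') (b - b').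
Proof. by rewrite /joint opp_block_mx add_block_mx !oppr0 !addr0. Qed.

Lemma dyadicE p q (a : 'cV[C]_p) (b : 'cV[C]_q) i j :
  (a *m dagger b) i j = a i 0 * Num.conj (b j 0).
Proof. by rewrite mxE big_ord1 daggerE. Qed.

Lemma form_payA_dyadic p q (U : 'M[C]_(p * q)) (a b : 'cV[C]_q) (w v : 'cV[C]_p) :
  form (payA U (a *m dagger b)) w v = Num.conj (form U (tensv v a) (tensv w b)).
Proof.
rewrite formE [form U _ _]formE sum_mxtens rmorph_sum exchange_big /=.
apply: eq_bigr => k _.
transitivity (\sum_i \sum_j \sum_l Num.conj (w i 0) *
   Num.conj (U (mxtens_index (k, l)) (mxtens_index (i, j))) * (a l 0 * Num.conj (b j 0)) * v k 0).
  apply: eq_bigr => i _; rewrite payAE mulr_sumr mulr_suml; apply: eq_bigr => j _.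
  by rewrite mulr_sumr mulr_suml; apply: eq_bigr => l _; rewrite dyadicE mulrA.
symmetry; under eq_bigr => l _ do rewrite sum_mxtens.
rewrite rmorph_sum.
under eq_bigr => l _ do rewrite rmorph_sum.
under eq_bigr => l _ do under eq_bigr => i _ do rewrite rmorph_sum.
rewrite exchange_big /=.
under eq_bigr => i _ do rewrite exchange_big /=.
apply: eq_bigr => i _; apply: eq_bigr => j _; apply: eq_bigr => l _.
by rewrite !tensvE !rmorphM /= !conjCK; ring.
Qed.

Lemma form_payB_dyadic p q (U : 'M[C]_(p * q)) (a b : 'cV[C]_p) (w v : 'cV[C]_q) :
  form (payB U (a *m dagger b)) w v = Num.conj (form U (tensv a v) (tensv b w)).
Proof.
rewrite formE [form U _ _]formE.
transitivity (\sum_j \sum_l \sum_i \sum_k Num.conj (w j 0) *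
   Num.conj (U (mxtens_index (k, l)) (mxtens_index (i, j))) * (a k 0 * Num.conj (b i 0)) * v l 0).
  apply: eq_bigr => j _; apply: eq_bigr => l _.
  rewrite payBE mulr_sumr mulr_suml; apply: eq_bigr => i _.
  by rewrite mulr_sumr mulr_suml; apply: eq_bigr => k _; rewrite dyadicE mulrA.
symmetry; rewrite sum_mxtens rmorph_sum.
under eq_bigr => k _ do rewrite rmorph_sum.
under eq_bigr => k _ do under eq_bigr => l _ do rewrite sum_mxtens rmorph_sum.
under eq_bigr => k _ do under eq_bigr => l _ do under eq_bigr => i _ do rewrite rmorph_sum.
under eq_bigr => k _ do under eq_bigr => l _ do rewrite exchange_big.
under eq_bigr => k _ do rewrite exchange_big.
rewrite exchange_big.
under eq_bigr => j _ do rewrite exchange_big.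
under eq_bigr => j _ do under eq_bigr => l _ do rewrite exchange_big.
apply: eq_bigr => j _; apply: eq_bigr => l _; apply: eq_bigr => i _; apply: eq_bigr => k _.
by rewrite !tensvE !rmorphM /= !conjCK; ring.
Qed.

(** * Frobenius norm *)

Definition frob2 {p q : nat} (A : 'M[C]_(p, q)) : R := \sum_i \sum_j cabs (A i j) ^+ 2.

Lemma frobE p q (A : 'M[C]_(p, q)) : frob A = Num.sqrt (frob2 A).
Proof. by []. Qed.

Lemma frob2N p q (A : 'M[C]_(p, q)) : frob2 (- A) = frob2 A.
Proof. by apply: eq_bigr => i _; apply: eq_bigr => j _; rewrite mxE cabsN. Qed.

Lemma frob2_block_diag p q (A : 'M[C]_p) (B : 'M[C]_q) :
  frob2 (block_mx A 0 0 B) = frob2 A + frob2 B.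
Proof.
rewrite /frob2 sumr_add; congr (_ + _); apply: eq_bigr => i _; rewrite sumr_add.
  rewrite [X in _ + X]big1 ?addr0 => [|j _]; last by rewrite block_mxEur mxE cabs0 expr0n.
  by apply: eq_bigr => j _; rewrite block_mxEul.
rewrite [X in X + _]big1 ?add0r => [|j _]; last by rewrite block_mxEdl mxE cabs0 expr0n.
by apply: eq_bigr => j _; rewrite block_mxEdr.
Qed.

(* Cauchy-Schwarz against the constant vector, from [0 <= \sum_(i,j) (F i - F j)^2]. *)
Lemma sqr_sum_le_card (I : finType) (F : I -> R) :
  (\sum_i F i) ^+ 2 <= #|I|%:R * \sum_i F i ^+ 2.
Proof.
set S := \sum_i F i; set Q := \sum_i F i ^+ 2.
have cardI : #|(xpredT : pred I)| = #|I| by apply: eq_card.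
have expand i : \sum_j (F i - F j) ^+ 2 = #|I|%:R * F i ^+ 2 - 2 * F i * S + Q.
  rewrite (eq_bigr (fun j => F i ^+ 2 - 2 * F i * F j + F j ^+ 2)) => [|j _]; last by ring.
  by rewrite !big_split /= sumr_const sumrN -mulr_sumr -/S -/Q cardI -[_ *+ #|I|]mulr_natl.
have : 0 <= \sum_i \sum_j (F i - F j) ^+ 2.
  by apply: sumr_ge0 => i _; apply: sumr_ge0 => j _; apply: sqr_ge0.
rewrite (eq_bigr _ (fun i _ => expand i)) !big_split /= sumrN -mulr_sumr -mulr_suml.
rewrite -mulr_sumr -/S -/Q sumr_const cardI -mulr_natl mulr1.
nra.
Qed.

Lemma frob2_le_l1 s r (X : 'M[C]_s) (M : 'M[C]_r) :
  (forall i k, cabs (X i k) <= \sum_j \sum_l cabs (M j l)) ->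
  frob2 X <= (s * r)%:R ^+ 2 * frob2 M.
Proof.
set S := \sum_j \sum_l cabs (M j l) => X_le.
have S_ge0 : 0 <= S by do 2![apply: sumr_ge0 => ? _]; apply: cabs_ge0.
have S2_le : S ^+ 2 <= r%:R ^+ 2 * frob2 M.
  rewrite /S pair_bigA /= (le_trans (sqr_sum_le_card _)) //.
  by rewrite card_prod card_ord natrM -expr2 /frob2 pair_bigA.
apply: (@le_trans _ _ (\sum_(i < s) \sum_(k < s) S ^+ 2)).
  apply: ler_sum => i _; apply: ler_sum => k _.
  by rewrite lerXn2r ?nnegrE ?cabs_ge0.
have -> : \sum_(i < s) \sum_(k < s) S ^+ 2 = s%:R ^+ 2 * S ^+ 2.
  by rewrite !sumr_const !card_ord; ring.
have -> : (s * r)%:R ^+ 2 * frob2 M = s%:R ^+ 2 * (r%:R ^+ 2 * frob2 M).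
  by rewrite natrM; ring.
by rewrite ler_wpM2l ?exprn_ge0.
Qed.

(** * Trace norm and operator norm *)

Lemma diag_mx_mul N (a b : 'rV[C]_N) :
  diag_mx a *m diag_mx b = diag_mx (\row_k (a 0 k * b 0 k)).
Proof.
apply/matrixP=> i j; rewrite mul_diag_mx !mxE.
by have [->|] := eqVneq i j; rewrite ?mulr1n ?mulr0n ?mulr0.
Qed.

Lemma psd_spectral N (A : 'M[C]_N) : psd A ->
  exists (V : 'M[C]_N) (d : 'rV[C]_N),
  [/\ V *m dagger V = 1%:M, A = dagger V *m diag_mx d *m V & forall k, 0 <= d 0 k].
Proof.
move=> A_psd; set V := spectralmx A; set d := spectral_diag A.
have A_normal : A \is normalmx by apply/normalmxP; rewrite -dagger_trmx dagger_psd.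
have V_inv : invmx V = dagger V by rewrite invmx_unitary ?spectral_unitarymx ?dagger_trmx.
have VV' : V *m dagger V = 1%:M by rewrite dagger_trmx; apply/unitarymxP/spectral_unitarymx.
have eA : A = dagger V *m diag_mx d *m V.
  by move/orthomx_spectralP: A_normal; rewrite -/V -/d V_inv.
exists V, d; split => // k.
have := A_psd (dagger V *m delta_mx k 0).
by rewrite -/(form _ _ _) {1}eA form_conj !mulmxA VV' mul1mx form_delta mxE eqxx mulr1n.
Qed.

Lemma psd_gram p q (D : 'M[C]_(p, q)) : psd (dagger D *m D).
Proof.
by move=> x; rewrite -/(form _ x x) -(mulmx1 (dagger D)) form_conj form1 ler0c vnorm2_ge0.
Qed.

Lemma psd_conj N (W E : 'M[C]_N) : psd E -> psd (dagger W *m E *m W).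
Proof. by move=> E_psd x; rewrite -/(form _ x x) form_conj; apply: E_psd. Qed.

Lemma psd_diag N (e : 'rV[C]_N) : (forall k, 0 <= e 0 k) -> psd (diag_mx e).
Proof.
move=> e_ge0 y; rewrite mul_mx_diag mxE; apply: sumr_ge0 => k _.
rewrite mxE daggerE mulrAC -sqr_cabs mulr_ge0 ?e_ge0 //.
by rewrite ler0c exprn_ge0 ?cabs_ge0.
Qed.

Lemma gram_sqrt p q (D : 'M[C]_(p, q)) :
  exists S : 'M[C]_q, psd S /\ S *m S = dagger D *m D.
Proof.
have [W [s [WW' eG s_ge0]]] := psd_spectral (psd_gram D).
pose e := \row_k sqrtC (s 0 k).
exists (dagger W *m diag_mx e *m W); split.
  by apply/psd_conj/psd_diag => k; rewrite mxE sqrtC_ge0.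
rewrite eG -!mulmxA [W *m (dagger W *m _)]mulmxA WW' mul1mx !mulmxA.
rewrite -[_ *m diag_mx e *m diag_mx e]mulmxA diag_mx_mul.
by congr (_ *m diag_mx _ *m _); apply/rowP=> k; rewrite !mxE -expr2 sqrtCK.
Qed.

Lemma absmxP N (D : 'M[C]_N) : psd (absmx D) /\ absmx D *m absmx D = dagger D *m D.
Proof.
have [S S_sqrt] := gram_sqrt D.
by apply: (@xgetPex _ 0 [set X | psd X /\ X *m X = dagger D *m D]); exists S.
Qed.

Lemma vnorm2_col p q (A : 'M[C]_(p, q)) k : (vnorm2 (col k A))%:C%C = (dagger A *m A) k k.
Proof.
rewrite /vnorm2 rmorph_sum mxE; apply: eq_bigr => i _.
by rewrite daggerE !mxE -sqr_cabs.
Qed.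

(* An eigenbasis [F] of [|D|] realises [Tr |D|] as [\sum_k |D f_k|]. *)
Lemma tracenorm_frame N (D : 'M[C]_N) : exists F : 'M[C]_N,
  [/\ F *m dagger F = 1%:M, forall k, vnorm (col k F) = 1
    & tracenorm D = \sum_k vnorm (col k (D *m F))].
Proof.
have [S_psd SS] := absmxP D.
have [V [d [VV' eS d_ge0]]] := psd_spectral S_psd.
have VS : V *m absmx D = diag_mx d *m V by rewrite eS !mulmxA VV' mul1mx.
have SV' : absmx D *m dagger V = dagger V *m diag_mx d by rewrite eS -mulmxA VV' mulmx1.
have gram : dagger (D *m dagger V) *m (D *m dagger V) = diag_mx d *m diag_mx d.
  rewrite dagger_mul daggerK -mulmxA (mulmxA (dagger D)) -SS -mulmxA SV'.
  by rewrite mulmxA VS -mulmxA (mulmxA V) VV' mul1mx.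
exists (dagger V); split => [|k|]; first by rewrite daggerK mulmx1C.
  rewrite vnormE (_ : vnorm2 _ = 1) ?sqrtr1 //.
  by apply/complexI; rewrite vnorm2_col daggerK VV' mxE eqxx.
rewrite /tracenorm eS mxtrace_mulC mulmxA VV' mul1mx mxtrace_diag raddf_sum.
apply: eq_bigr => k _; rewrite vnormE.
have -> : vnorm2 (col k (D *m dagger V)) = complex.Re (d 0 k) ^+ 2.
  apply/complexI; rewrite vnorm2_col gram diag_mx_mul mxE eqxx mulr1n mxE.
  by rewrite rmorphXn /= RRe_real ?ger0_real // expr2.
by rewrite sqrtr_sqr ger0_norm // -lecR RRe_real ?ger0_real.
Qed.

Lemma mul_dagger_dyadic s t N (A : 'M[C]_(s, N)) (K : 'M[C]_(t, N)) :
  A *m dagger K = \sum_k col k A *m dagger (col k K).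
Proof.
apply/matrixP=> i j; rewrite !mxE summxE; apply: eq_bigr => k _.
by rewrite dyadicE !mxE.
Qed.

Lemma vnorm2_col_mx p q (a : 'cV[C]_p) (b : 'cV[C]_q) :
  vnorm2 (col_mx a b) = vnorm2 a + vnorm2 b.
Proof.
by rewrite /vnorm2 sumr_add; congr (_ + _); apply: eq_bigr => i _; rewrite (col_mxEu, col_mxEd).
Qed.

Lemma vnorm_col_mx_le p q (a : 'cV[C]_p) (b : 'cV[C]_q) :
  vnorm (col_mx a b) <= vnorm a + vnorm b.
Proof.
apply: vnorm_le; first by rewrite addr_ge0 ?vnorm_ge0.
rewrite vnorm2_col_mx -!sqr_vnorm; have := vnorm_ge0 a; have := vnorm_ge0 b; nra.
Qed.

Lemma vnorm_col_mxl_le p q (a : 'cV[C]_p) (b : 'cV[C]_q) : vnorm a <= vnorm (col_mx a b).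
Proof. by rewrite !vnormE ler_wsqrtr // vnorm2_col_mx lerDl vnorm2_ge0. Qed.

Lemma vnorm_col_mxr_le p q (a : 'cV[C]_p) (b : 'cV[C]_q) : vnorm b <= vnorm (col_mx a b).
Proof. by rewrite !vnormE ler_wsqrtr // vnorm2_col_mx lerDr vnorm2_ge0. Qed.

(* Test the form against [w = X v] itself. *)
Lemma vnorm_mul_le_form N (X : 'M[C]_N) v c : 0 <= c ->
  (forall w, cabs (form X w v) <= c * vnorm w) -> vnorm (X *m v) <= c.
Proof.
move=> c_ge0 X_le; set w := X *m v.
have w_ge0 := vnorm_ge0 w.
have form_w : form X w v = (vnorm2 w)%:C%C by rewrite -form1 /form mulmx1 mulmxA.
have : vnorm w ^+ 2 <= c * vnorm w.
  by rewrite sqr_vnorm -[vnorm2 w]ger0_norm ?vnorm2_ge0 // -cabs_real -form_w X_le.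
nra.
Qed.

Section DyadicBound.
Variables (s t : nat) (f : {linear 'M[C]_s -> 'M[C]_t}).
Hypothesis f_dyadic_le : forall a b w v,
  cabs (form (f (a *m dagger b)) w v) <= vnorm w * vnorm v * (vnorm a * vnorm b).

Lemma vnorm_dyadic_mul_le N (A K : 'M[C]_(s, N)) v :
  (forall k, vnorm (col k K) <= 1) -> vnorm v <= 1 ->
  vnorm (f (A *m dagger K) *m v) <= \sum_k vnorm (col k A).
Proof.
move=> K_le1 v_le1; apply: vnorm_mul_le_form => [|w].
  by apply: sumr_ge0 => k _; apply: vnorm_ge0.
rewrite mul_dagger_dyadic linear_sum form_sum mulr_suml (le_trans (ler_cabs_sum _)) //.
apply: ler_sum => k _; rewrite (le_trans (f_dyadic_le _ _ _ _)) // mulrACA [vnorm w * _]mulrC.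
by rewrite ler_piMr ?mulr_ge0 ?vnorm_ge0 // mulr_ile1 ?vnorm_ge0.
Qed.

End DyadicBound.

Lemma opnorm_block_diag_le p q (X : 'M[C]_p) (Y : 'M[C]_q) c1 c2 :
  (forall v, vnorm v <= 1 -> vnorm (X *m v) <= c1) ->
  (forall v, vnorm v <= 1 -> vnorm (Y *m v) <= c2) ->
  opnorm (block_mx X 0 0 Y) <= c1 + c2.
Proof.
move=> X_le Y_le; apply: ge_sup => [|_ [v [v_le1 ->]]].
  exists (vnorm (block_mx X 0 0 Y *m 0)), 0; split => //.
  by rewrite vnormE /vnorm2 big1 ?sqrtr0 ?ler01 // => i _; rewrite mxE cabs0 expr0n.
rewrite -(vsubmxK v) mul_block_col !mul0mx addr0 add0r (le_trans (vnorm_col_mx_le _ _)) //.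
rewrite lerD ?X_le ?Y_le // (le_trans _ v_le1) // -{2}(vsubmxK v).
  exact: vnorm_col_mxl_le.
exact: vnorm_col_mxr_le.
Qed.

(** * Lipschitz bounds for the game operator *)

Section GameBounds.
Variables (p q : nat) (Omega : finType) (P : Omega -> 'M[C]_(p * q)) (u : Omega -> R).
Hypothesis P_povm : povm P.
Hypothesis u_le1 : forall w, `|u w| <= 1.
Local Notation U := (payoff P u).

Lemma cabs_payoff_le1 r s : cabs (U r s) <= 1.
Proof.
by rewrite -form_delta (le_trans (payoff_form_le P_povm u_le1 _ _)) // !vnorm_delta mulr1.
Qed.

Lemma cabs_payA_le M i k : cabs (payA U M i k) <= \sum_j \sum_l cabs (M j l).
Proof.
rewrite payAE exchange_big (le_trans (ler_cabs_sum _)) //; apply: ler_sum => l _.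
rewrite (le_trans (ler_cabs_sum _)) //; apply: ler_sum => j _.
by rewrite cabsM cabsJ ler_piMl ?cabs_ge0 ?cabs_payoff_le1.
Qed.

Lemma cabs_payB_le M j l : cabs (payB U M j l) <= \sum_i \sum_k cabs (M i k).
Proof.
rewrite payBE exchange_big (le_trans (ler_cabs_sum _)) //; apply: ler_sum => k _.
rewrite (le_trans (ler_cabs_sum _)) //; apply: ler_sum => i _.
by rewrite cabsM cabsJ ler_piMl ?cabs_ge0 ?cabs_payoff_le1.
Qed.

Lemma frob_gameF_le alpha beta :
  frob (gameF U alpha beta) <= (p * q)%:R * frob (joint alpha beta).
Proof.
rewrite !frobE gameFE !frob2_block_diag frob2N -[X in X * _]ger0_norm ?ler0n //.
rewrite -sqrtr_sqr -sqrtrM ?exprn_ge0 ?ler0n // ler_wsqrtr // mulrDr addrC lerD //.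
  have -> : (p * q)%:R = (q * p)%:R :> R by rewrite mulnC.
  by apply: frob2_le_l1 => j l; apply: cabs_payB_le.
exact/frob2_le_l1/cabs_payA_le.
Qed.

Lemma cabs_form_payA_dyadic_le (a b : 'cV[C]_q) (w v : 'cV[C]_p) :
  cabs (form (payA U (a *m dagger b)) w v) <= vnorm w * vnorm v * (vnorm a * vnorm b).
Proof.
rewrite form_payA_dyadic cabsJ (le_trans (payoff_form_le P_povm u_le1 _ _)) // !vnorm_tensv.
by rewrite mulrACA [vnorm v * _]mulrC.
Qed.

Lemma cabs_form_payB_dyadic_le (a b : 'cV[C]_p) (w v : 'cV[C]_q) :
  cabs (form (payB U (a *m dagger b)) w v) <= vnorm w * vnorm v * (vnorm a * vnorm b).
Proof.
rewrite form_payB_dyadic cabsJ (le_trans (payoff_form_le P_povm u_le1 _ _)) // !vnorm_tensv.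
by rewrite mulrACA mulrC [vnorm v * _]mulrC.
Qed.

Lemma opnorm_gameF_le alpha beta :
  opnorm (gameF U alpha beta) <= 2 * tracenorm (joint alpha beta).
Proof.
have [F [FF' F_col1 ->]] := tracenorm_frame (joint alpha beta).
set H := usubmx F; set K := dsubmx F.
have eF : F = col_mx H K by rewrite vsubmxK.
have [HH' KK'] : H *m dagger H = 1%:M /\ K *m dagger K = 1%:M.
  move: FF'; rewrite eF !dagger_trmx tr_col_mx map_row_mx -!dagger_trmx mul_col_row.
  by rewrite [1%:M]scalar_mx_block => /eq_block_mx [-> _ _ ->].
have colF k : col k (joint alpha beta *m F) = col_mx (col k (alpha *m H)) (col k (beta *m K)).
  by rewrite eF mul_block_col !mul0mx addr0 add0r col_col_mx.
have H_col_le1 k : vnorm (col k H) <= 1.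
  by rewrite -(F_col1 k) eF col_col_mx vnorm_col_mxl_le.
have K_col_le1 k : vnorm (col k K) <= 1.
  by rewrite -(F_col1 k) eF col_col_mx vnorm_col_mxr_le.
rewrite gameFE mulr_natl mulr2n; apply: opnorm_block_diag_le => v v_le1.
  rewrite -[X in payA _ X]mulmx1 -KK' mulmxA.
  rewrite (le_trans (vnorm_dyadic_mul_le cabs_form_payA_dyadic_le _ K_col_le1 v_le1)) //.
  by apply: ler_sum => k _; rewrite colF vnorm_col_mxr_le.
rewrite mulNmx vnormN -[X in payB _ X]mulmx1 -HH' mulmxA.
rewrite (le_trans (vnorm_dyadic_mul_le cabs_form_payB_dyadic_le _ H_col_le1 v_le1)) //.
by apply: ler_sum => k _; rewrite colF vnorm_col_mxl_le.
Qed.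

End GameBounds.

End Game.

Theorem mainTheorem5 (R : realType) :
  (* Frobenius pair: gamma = O(2^d), d = n + m, uniformly over all games *)
  (exists c : R, 0 < c /\
    forall (n m : nat) (Omega : finType) (P : Omega -> 'M[R[i]]_(2 ^ n * 2 ^ m))
      (u : Omega -> R) (alpha alpha' : 'M[R[i]]_(2 ^ n))
      (beta beta' : 'M[R[i]]_(2 ^ m)),
    povm P -> (forall w, `|u w| <= 1) ->
    density alpha -> density alpha' -> density beta -> density beta' ->
    frob (gameF (payoff P u) alpha beta - gameF (payoff P u) alpha' beta')
      <= (c * 2 ^+ (n + m)) * frob (joint alpha beta - joint alpha' beta'))
  /\
  (* trace norm / operator norm pair: gamma = O(1), uniformly over all games *)
  (exists c : R, 0 < c /\
    forall (n m : nat) (Omega : finType) (P : Omega -> 'M[R[i]]_(2 ^ n * 2 ^ m))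
      (u : Omega -> R) (alpha alpha' : 'M[R[i]]_(2 ^ n))
      (beta beta' : 'M[R[i]]_(2 ^ m)),
    povm P -> (forall w, `|u w| <= 1) ->
    density alpha -> density alpha' -> density beta -> density beta' ->
    opnorm (gameF (payoff P u) alpha beta - gameF (payoff P u) alpha' beta')
      <= c * tracenorm (joint alpha beta - joint alpha' beta')).
Proof.
(* F is linear, so the bounds hold for all matrices, not only for states. *)
split; [exists 1 | exists 2]; split => // n m Omega P u a a' b b' P_povm u_le1 _ _ _ _.
  rewrite gameFB jointB mul1r exprD -!natrX -natrM.
  exact: frob_gameF_le.
rewrite gameFB jointB; exact: opnorm_gameF_le.
Qed.
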